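(* If $\sum_{i=1}^M b_i\ge1$, then for every $\epsilon>0$, $$\bar\Delta_{\mathrm{opt}}(\epsilon)\ge\bar\Delta_{\mathrm{opt},2}(\epsilon)\ge\sum_{i=1}^M\Big[\frac{w_i}{\min\{b_i,\beta^\star\sqrt{w_i}\}}+w_i\Big],$$ where $\beta^\star\in[0,\max_l b_l/\sqrt{w_l}]$ is the root of $\sum_{i=1}^M\min\{b_i,\beta^\star\sqrt{w_i}\}=1$.
   Context: Fix an integer $M\ge1$, weights $w_1,\dots,w_M>0$, constants $b_1,\dots,b_M>0$, and $\epsilon>0$. For $\mathbf r\in(0,\infty)^M$ write $S(\mathbf r)=\sum_{i=1}^M r_i$ and define $$\bar\Delta(\mathbf r)=\sum_{l=1}^M \frac{w_l e^{-r_l\epsilon}}{r_l}\, e^{\epsilon S(\mathbf r)}\big(1+S(\mathbf r)\big)+\sum_{l=1}^M w_l,\qquad \sigma_l(\mathbf r)=\frac{(1-e^{-r_l\epsilon})S(\mathbf r)+r_le^{-r_l\epsilon}}{S(\mathbf r)+1}.$$ Problem 1: minimize $\bar\Delta(\mathbf r)$ over $\mathbf r\in(0,\infty)^M$ subject to $\sigma_l(\mathbf r)\le b_l$ for all $l$; its optimal (infimum) value is $\bar\Delta_{\mathrm{opt}}(\epsilon)$. Problem 2: minimize $\bar\Delta(\mathbf r)$ over $\mathbf r\in(0,\infty)^M$ subject to $r_l\le b_l\big(S(\mathbf r)+1\big)$ for all $l$; its optimal (infimum) value is $\bar\Delta_{\mathrm{opt},2}(\epsilon)$. *)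

From Stdlib Require Import Reals Lra Lia.
Open Scope R_scope.

(* sum_lt n f = f 0 + ... + f (n-1)  (indices 0..n-1 encode 1..M) *)
Fixpoint sum_lt (n : nat) (f : nat -> R) : R :=
  match n with
  | O => 0
  | S k => sum_lt k f + f k
  end.

(* max_lt n f = max_{i<n} f i  (for n >= 1 and f >= 0 this is the true max) *)
Fixpoint max_lt (n : nat) (f : nat -> R) : R :=
  match n with
  | O => 0
  | S k => Rmax (max_lt k f) (f k)
  end.

Definition Ssum (M : nat) (r : nat -> R) : R := sum_lt M r.

Definition Delta_bar (M : nat) (w : nat -> R) (eps : R) (r : nat -> R) : R :=
  sum_lt M (fun l => w l * exp (- r l * eps) / r l)
    * exp (eps * Ssum M r) * (1 + Ssum M r)
  + sum_lt M w.

Definition sigma (M : nat) (eps : R) (r : nat -> R) (l : nat) : R :=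
  ((1 - exp (- r l * eps)) * Ssum M r + r l * exp (- r l * eps))
    / (Ssum M r + 1).

Definition positive_vec (M : nat) (r : nat -> R) : Prop :=
  forall i, (i < M)%nat -> 0 < r i.

Definition feasible1 (M : nat) (b : nat -> R) (eps : R) (r : nat -> R) : Prop :=
  positive_vec M r /\ forall l, (l < M)%nat -> sigma M eps r l <= b l.

Definition feasible2 (M : nat) (b : nat -> R) (r : nat -> R) : Prop :=
  positive_vec M r /\ forall l, (l < M)%nat -> r l <= b l * (Ssum M r + 1).

Definition is_inf_value (P : (nat -> R) -> Prop) (f : (nat -> R) -> R) (v : R) : Prop :=
  (forall r, P r -> v <= f r) /\
  (forall u, (forall r, P r -> u <= f r) -> u <= v).

Definition Delta_opt_is (M : nat) (w b : nat -> R) (eps v : R) : Prop :=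
  is_inf_value (feasible1 M b eps) (Delta_bar M w eps) v.

Definition Delta_opt2_is (M : nat) (w b : nat -> R) (eps v : R) : Prop :=
  is_inf_value (feasible2 M b) (Delta_bar M w eps) v.

(* Every point feasible for the first problem is feasible for the relaxed
   second one, because [sigma l r] dominates the share [r l / (S + 1)]; hence
   the first infimum is at least the second.  For the lower bound, a feasible
   [r] has shares [x i = r i / (S + 1)] that are positive, at most [b i] and sum
   to at most [1], and [Delta_bar r] is at least [sum (w i / x i) + sum w]
   since [exp (eps (S - r l)) >= 1].  Finally [w / x] lies above its tangent at
   [m = min (b, beta sqrt w)], whose slope [- w / m^2] is [- 1 / beta^2]
   when [m < b] and steeper when [m = b] (where [x <= m]); summing these
   tangent bounds and using [sum m = 1 >= sum x] gives [sum (w / x) >= sum (w / m)]. *)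

From Pilot Require Import Defs.
From Stdlib Require Import Reals Lra Lia.
Open Scope R_scope.

Lemma sum_lt_ext n f g :
  (forall i, (i < n)%nat -> f i = g i) -> sum_lt n f = sum_lt n g.
Proof.
  induction n as [|n IH]; intros Hfg; simpl; [reflexivity|].
  rewrite IH, (Hfg n); auto with arith.
Qed.

Lemma sum_lt_le n f g :
  (forall i, (i < n)%nat -> f i <= g i) -> sum_lt n f <= sum_lt n g.
Proof.
  induction n as [|n IH]; intros Hfg; simpl; [lra|].
  apply Rplus_le_compat; auto with arith.
Qed.

Lemma sum_lt_plus n f g :
  sum_lt n (fun i => f i + g i) = sum_lt n f + sum_lt n g.
Proof. induction n as [|n IH]; simpl; [lra|]. rewrite IH; ring. Qed.

Lemma sum_lt_scal n c f : sum_lt n (fun i => c * f i) = c * sum_lt n f.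
Proof. induction n as [|n IH]; simpl; [ring|]. rewrite IH; ring. Qed.

Lemma sum_lt_nonneg n f :
  (forall i, (i < n)%nat -> 0 <= f i) -> 0 <= sum_lt n f.
Proof.
  intros Hf. apply Rle_trans with (sum_lt n (fun i => 0 * f i)).
  - rewrite sum_lt_scal; lra.
  - apply sum_lt_le; intros i Hi; rewrite Rmult_0_l; auto.
Qed.

Lemma sum_lt_term_le n f l :
  (forall i, (i < n)%nat -> 0 <= f i) -> (l < n)%nat -> f l <= sum_lt n f.
Proof.
  induction n as [|n IH]; intros Hf Hl; simpl; [lia|].
  assert (0 <= sum_lt n f) by (apply sum_lt_nonneg; auto with arith).
  assert (0 <= f n) by auto with arith.
  destruct (Nat.eq_dec l n) as [->|Hne]; [lra|].
  assert (f l <= sum_lt n f) by (apply IH; [auto with arith | lia]).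
  lra.
Qed.

Lemma exp_le_1 x : x <= 0 -> exp x <= 1.
Proof.
  intros Hx. assert (H := exp_ineq1_le (- x)).
  assert (E : exp x * exp (- x) = 1) by (rewrite <- exp_plus, Rplus_opp_r; apply exp_0).
  assert (0 < exp x) by apply exp_pos.
  nra.
Qed.

Lemma exp_ge_1 x : 0 <= x -> 1 <= exp x.
Proof. intros Hx. assert (H := exp_ineq1_le x). lra. Qed.

Lemma is_inf_value_le_subset (P Q : (nat -> R) -> Prop) f u v :
  (forall r, P r -> Q r) -> is_inf_value Q f u -> is_inf_value P f v -> u <= v.
Proof.
  intros HPQ [HuQ _] [_ HvP]. apply HvP. intros r Hr. apply HuQ, HPQ, Hr.
Qed.

Section PositiveVector.

Variables (M : nat) (r : nat -> R).
Hypothesis Hr : positive_vec M r.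

Lemma Ssum_nonneg : 0 <= Ssum M r.
Proof. apply sum_lt_nonneg; intros i Hi; left; apply Hr, Hi. Qed.

Lemma le_Ssum l : (l < M)%nat -> r l <= Ssum M r.
Proof. apply sum_lt_term_le; intros i Hi; left; apply Hr, Hi. Qed.

Lemma share_le_sigma eps l :
  0 <= eps -> (l < M)%nat -> r l / (Ssum M r + 1) <= Defs.sigma M eps r l.
Proof.
  intros Heps Hl. unfold Defs.sigma.
  assert (Hrl := Hr l Hl). assert (HrS := le_Ssum l Hl).
  assert (He : exp (- r l * eps) <= 1) by (apply exp_le_1; nra).
  apply Rmult_le_compat_r.
  - left; apply Rinv_0_lt_compat; lra.
  - nra.
Qed.

Lemma sum_share_le_1 : sum_lt M (fun i => r i / (Ssum M r + 1)) <= 1.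
Proof.
  assert (HS := Ssum_nonneg).
  rewrite (sum_lt_ext _ _ (fun i => / (Ssum M r + 1) * r i))
    by (intros; unfold Rdiv; ring).
  rewrite sum_lt_scal. fold (Ssum M r).
  apply (Rmult_le_reg_l (Ssum M r + 1)); [lra|].
  rewrite <- Rmult_assoc, Rinv_r; lra.
Qed.

Lemma sum_inv_share_le_Delta_bar w eps :
  0 <= eps -> (forall i, (i < M)%nat -> 0 <= w i) ->
  sum_lt M (fun i => w i / (r i / (Ssum M r + 1))) + sum_lt M w
  <= Delta_bar M w eps r.
Proof.
  intros Heps Hw. unfold Delta_bar. apply Rplus_le_compat_r.
  assert (HS := Ssum_nonneg).
  set (c := exp (eps * Ssum M r) * (1 + Ssum M r)).
  rewrite Rmult_assoc, Rmult_comm. fold c.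
  rewrite <- sum_lt_scal. apply sum_lt_le. intros i Hi.
  assert (Hri := Hr i Hi). assert (HriS := le_Ssum i Hi). assert (Hwi := Hw i Hi).
  assert (Hexp : 1 <= exp (- r i * eps) * exp (eps * Ssum M r)).
  { rewrite <- exp_plus. apply exp_ge_1. nra. }
  unfold c.
  replace (w i / (r i / (Ssum M r + 1))) with (w i * (1 + Ssum M r) / r i * 1)
    by (field; lra).
  replace (exp (eps * Ssum M r) * (1 + Ssum M r) * (w i * exp (- r i * eps) / r i))
    with (w i * (1 + Ssum M r) / r i * (exp (- r i * eps) * exp (eps * Ssum M r)))
    by (field; lra).
  apply Rmult_le_compat_l; [|exact Hexp].
  apply Rmult_le_pos; [nra | left; apply Rinv_0_lt_compat, Hri].
Qed.

End PositiveVector.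

Lemma feasible1_feasible2 M b eps r :
  0 <= eps -> feasible1 M b eps r -> feasible2 M b r.
Proof.
  intros Heps [Hr Hsig]. split; [exact Hr|]. intros l Hl.
  assert (HS := Ssum_nonneg M r Hr).
  assert (Hshare := share_le_sigma M r Hr eps l Heps Hl).
  assert (Hle : r l / (Ssum M r + 1) <= b l) by (eapply Rle_trans; eauto).
  apply (Rmult_le_compat_r (Ssum M r + 1)) in Hle; [|lra].
  unfold Rdiv in Hle. rewrite Rmult_assoc, Rinv_l in Hle; lra.
Qed.

Lemma inv_ge_tangent w m x :
  0 <= w -> 0 < m -> 0 < x -> w / m - w * (x - m) / (m * m) <= w / x.
Proof.
  intros Hw Hm Hx.
  assert (E : w / x - (w / m - w * (x - m) / (m * m))
              = w * ((x - m) * (x - m)) / (x * (m * m))) by (field; lra).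
  assert (0 <= w * ((x - m) * (x - m)) / (x * (m * m))).
  { apply Rmult_le_pos.
    - apply Rmult_le_pos; [exact Hw | apply Rle_0_sqr].
    - left; apply Rinv_0_lt_compat; apply Rmult_lt_0_compat; [exact Hx | nra]. }
  lra.
Qed.

Lemma inv_ge_tangent_Rmin w b beta x :
  0 < w -> 0 < beta -> 0 < x -> x <= b ->
  w / Rmin b (beta * sqrt w) - (x - Rmin b (beta * sqrt w)) / (beta * beta)
  <= w / x.
Proof.
  intros Hw Hbeta Hx Hxb.
  assert (Hb0 : 0 < b) by lra.
  assert (Hs : 0 < sqrt w) by (apply sqrt_lt_R0, Hw).
  assert (Hss : sqrt w * sqrt w = w) by (apply sqrt_sqrt; lra).
  unfold Rmin; destruct (Rle_dec b (beta * sqrt w)) as [Hb|Hb].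
  - assert (Hslope : 1 / (beta * beta) <= w / (b * b)).
    { apply (Rmult_le_reg_r (beta * beta * (b * b))); [repeat apply Rmult_lt_0_compat; lra|].
      replace (1 / (beta * beta) * (beta * beta * (b * b))) with (b * b)
        by (field; lra).
      replace (w / (b * b) * (beta * beta * (b * b))) with (beta * beta * w)
        by (field; lra).
      assert (b * b <= (beta * sqrt w) * (beta * sqrt w))
        by (apply Rmult_le_compat; lra).
      nra. }
    assert (H := inv_ge_tangent w b x (Rlt_le _ _ Hw) ltac:(lra) Hx).
    assert (E1 : w * (x - b) / (b * b) = (x - b) * (w / (b * b))) by (field; lra).
    assert (E2 : (x - b) / (beta * beta) = (x - b) * (1 / (beta * beta))) by (field; lra).
    nra.
  - assert (H := inv_ge_tangent w (beta * sqrt w) x (Rlt_le _ _ Hw) ltac:(nra) Hx).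
    replace (w * (x - beta * sqrt w) / (beta * sqrt w * (beta * sqrt w)))
      with ((x - beta * sqrt w) / (beta * beta)) in H
      by (rewrite <- Hss at 2; field; lra).
    exact H.
Qed.

Lemma sum_inv_ge_water_filling M w b beta x :
  0 < beta ->
  (forall i, (i < M)%nat -> 0 < w i) ->
  (forall i, (i < M)%nat -> 0 < x i <= b i) ->
  sum_lt M x <= 1 ->
  sum_lt M (fun i => Rmin (b i) (beta * sqrt (w i))) = 1 ->
  sum_lt M (fun i => w i / Rmin (b i) (beta * sqrt (w i))) <= sum_lt M (fun i => w i / x i).
Proof.
  intros Hbeta Hw Hx Hsumx Hroot.
  set (m := fun i => Rmin (b i) (beta * sqrt (w i))) in *.
  apply Rle_trans with
    (sum_lt M (fun i => w i / m i + (- / (beta * beta)) * (x i + (-1) * m i))).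
  - rewrite sum_lt_plus, sum_lt_scal, sum_lt_plus, sum_lt_scal, Hroot.
    assert (0 < / (beta * beta)) by (apply Rinv_0_lt_compat; nra).
    change (sum_lt M (fun i => w i / Rmin (b i) (beta * sqrt (w i))))
      with (sum_lt M (fun i => w i / m i)).
    nra.
  - apply sum_lt_le. intros i Hi.
    destruct (Hx i Hi) as [Hxi Hxb].
    assert (H := inv_ge_tangent_Rmin (w i) (b i) beta (x i) (Hw i Hi) Hbeta Hxi Hxb).
    fold (m i) in H. unfold Rdiv in H |- *. lra.
Qed.

Lemma water_level_pos M w b beta :
  0 <= beta -> (forall i, (i < M)%nat -> 0 < b i) ->
  sum_lt M (fun i => Rmin (b i) (beta * sqrt (w i))) = 1 -> 0 < beta.
Proof.
  intros Hbeta0 Hb Hroot. destruct Hbeta0 as [|<-]; [assumption|].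
  assert (H : sum_lt M (fun i => Rmin (b i) (0 * sqrt (w i)))
              <= sum_lt M (fun i => 0 * b i)).
  { apply sum_lt_le. intros i Hi. rewrite !Rmult_0_l. apply Rmin_r. }
  rewrite sum_lt_scal, Hroot in H. lra.
Qed.

Theorem lemma3 (M : nat) (w b : nat -> R) (eps : R)
  (HM : (1 <= M)%nat)
  (Hw : forall i, (i < M)%nat -> 0 < w i)
  (Hb : forall i, (i < M)%nat -> 0 < b i)
  (Heps : 0 < eps)
  (Hsum : 1 <= sum_lt M b)
  (beta : R)
  (Hbeta0 : 0 <= beta)
  (Hbeta1 : beta <= max_lt M (fun l => b l / sqrt (w l)))
  (Hroot : sum_lt M (fun i => Rmin (b i) (beta * sqrt (w i))) = 1)
  (v1 v2 : R)
  (Hv1 : Delta_opt_is M w b eps v1)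
  (Hv2 : Delta_opt2_is M w b eps v2) :
  v1 >= v2 /\
  v2 >= sum_lt M (fun i => w i / Rmin (b i) (beta * sqrt (w i)) + w i).
Proof.
  split.
  - apply Rle_ge, (is_inf_value_le_subset (feasible1 M b eps) (feasible2 M b)
                     (Delta_bar M w eps)); auto.
    intros r; apply feasible1_feasible2; lra.
  - assert (Hbeta := water_level_pos M w b beta Hbeta0 Hb Hroot).
    apply Rle_ge, (proj2 Hv2). intros r [Hr Hr2].
    assert (HS := Ssum_nonneg M r Hr).
    rewrite sum_lt_plus.
    eapply Rle_trans; [| apply (sum_inv_share_le_Delta_bar M r Hr); [lra | intros i Hi; left; apply Hw, Hi]].
    apply Rplus_le_compat_r, sum_inv_ge_water_filling; auto.
    + intros i Hi. assert (Hri := Hr i Hi). assert (Hri2 := Hr2 i Hi). split.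
      * apply Rdiv_lt_0_compat; lra.
      * apply (Rmult_le_reg_r (Ssum M r + 1)); [lra|].
        unfold Rdiv. rewrite Rmult_assoc, Rinv_l; lra.
    + apply sum_share_le_1, Hr.
Qed.
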